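(* Let $G$ be a connected graph on $n\ge2$ vertices labeled so that $\mathbb{M}_1\ge\mathbb{M}_2\ge\cdots\ge\mathbb{M}_n$, where $\mathbb{M}_i=\frac{\sum_{j=1}^n d_{ij}\mathbb{D}_j}{\mathbb{D}_i}$. Let $N=\max_{1\le i,j\le n}d_{ij}\mathbb{D}_j/\mathbb{D}_i$. Then for $1\le i\le n$, \[\rho(\mathbb{D}(G))\le \frac{\mathbb{M}_i-N+\sqrt{(\mathbb{M}_i+N)^2+4N\sum_{k=1}^{i-1}(\mathbb{M}_k-\mathbb{M}_i)}}{2}.\] Equality holds if and only if $\mathbb{M}_1=\cdots=\mathbb{M}_n$, or for some $2\le t\le i$: (i) $d_{kl}\mathbb{D}_l/\mathbb{D}_k=N$ for all $1\le k\le n$, $1\le l\le t-1$, $k\ne l$; (ii) $\mathbb{M}_t=\cdots=\mathbb{M}_n$.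
   Context: $\mathbb{D}(G)=(d_{ij})$ is the distance matrix of $G$; $\mathbb{D}_i=\sum_j d_{ij}$ is the transmission of $v_i$; $\mathbb{M}_i$ is the average transmission; $\rho$ is the spectral radius. An empty sum equals $0$. *)

(* Numbers live in algC (algebraic complex numbers), so that
   every eigenvalue of the (real symmetric) distance matrix exists. *)
From HB Require Import structures.
From mathcomp Require Import all_boot all_order all_algebra all_field.
Set Implicit Arguments. Unset Strict Implicit. Unset Printing Implicit Defensive.
Import Order.TTheory GRing.Theory Num.Theory.
Local Open Scope ring_scope.

Definition simple_graph (n : nat) (adj : rel 'I_n) : Prop :=
  symmetric adj /\ irreflexive adj.

Definition connected_graph (n : nat) (adj : rel 'I_n) : Prop :=
  forall i j : 'I_n, connect adj i j.

Definition walk_of_length (n : nat) (adj : rel 'I_n) (i j : 'I_n) (k : nat) : bool :=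
  [exists p : k.-tuple 'I_n, path adj i p && (last i p == j)].

(* Shortest-path distance d_{ij}: the least k < n admitting a walk of length k
   (in a connected graph on n vertices such a k always exists). *)
Definition dist (n : nat) (adj : rel 'I_n) (i j : 'I_n) : nat :=
  find (walk_of_length adj i j) (iota 0 n).

Definition dist_mx (n : nat) (adj : rel 'I_n) : 'M[algC]_n :=
  \matrix_(i, j) (dist adj i j)%:R.

Definition transmission (n : nat) (adj : rel 'I_n) (i : 'I_n) : nat :=
  (\sum_(j < n) dist adj i j)%N.

Definition tratio (n : nat) (adj : rel 'I_n) (k l : 'I_n) : algC :=
  (dist adj k l * transmission adj l)%:R / (transmission adj k)%:R.

Definition avg_trans (n : nat) (adj : rel 'I_n) (i : 'I_n) : algC :=
  (\sum_(j < n) dist adj i j * transmission adj j)%:R / (transmission adj i)%:R.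

(* N = max_{i,j} d_ij D_j / D_i  (all these values are nonnegative reals). *)
Definition Nmax (n : nat) (adj : rel 'I_n) : algC :=
  \big[Num.max/0]_(i < n) \big[Num.max/0]_(j < n) tratio adj i j.

(* The eigenvalues of A (with multiplicity): the roots of its characteristic
   polynomial, which splits over the algebraically closed field algC. *)
Definition eigenvalues (n : nat) (A : 'M[algC]_n) : seq algC :=
  sval (closed_field_poly_normal (char_poly A)).

Definition spectral_radius (n : nat) (A : 'M[algC]_n) : algC :=
  \big[Num.max/0]_(z <- eigenvalues A) `|z|.

From HB Require Import structures.
From mathcomp Require Import all_boot all_order all_algebra all_field.
From mathcomp Require Import ring.
Import Order.TTheory GRing.Theory Num.Theory.
Set Implicit Arguments. Unset Strict Implicit. Unset Printing Implicit Defensive.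
Local Open Scope ring_scope.

(* Write b_kl = d_kl D_l / D_k: these are the entries of T^-1 D(G) T with
   T = diag(D_1, ..., D_n), so M_k = sum_l b_kl are its row sums and
   N = max b_kl.  Let rho_i be the claimed bound; it is the positive root of
   x (x + N) = M_i (x + N) + N sigma_i with sigma_i = sum_{k<i} (M_k - M_i).
   With delta_l = (M_l - M_i) / (rho_i + N) for l < i (0 otherwise), the
   vector w_l = D_l (1 + delta_l) satisfies
     rho_i w_k - (D(G) w)_k = D_k * slack_k,
   slack_k = [k >= i] (M_i - M_k) + sum_{l <> k} (N - b_kl) delta_l >= 0.
   The file first proves a Collatz-Wielandt lemma for a nonnegative matrix
   with positive off-diagonal entries: a positive w with A w <= rho w gives
   spectral radius <= rho, with equality iff A w = rho w. *)

Section NonnegMax.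
Variables (R : numDomainType) (I : eqType) (F : I -> R).
Hypothesis F_ge0 : forall x, 0 <= F x.

Let max_cases (x y : R) : Num.max x y = x \/ Num.max x y = y.
Proof. by rewrite /Order.max; case: ifP; auto. Qed.

Lemma bigmax_ge0 (s : seq I) : 0 <= \big[Num.max/0]_(x <- s) F x.
Proof.
elim: s => [|a s IH]; first by rewrite big_nil.
by rewrite big_cons; case: (max_cases (F a) (\big[Num.max/0]_(x <- s) F x)) => ->.
Qed.

Lemma bigmax_ge (s : seq I) y : y \in s -> F y <= \big[Num.max/0]_(x <- s) F x.
Proof.
elim: s => [|a s IH] //; rewrite in_cons big_cons.
have cmp : F a >=< \big[Num.max/0]_(x <- s) F x.
  by rewrite real_comparable ?ger0_real ?bigmax_ge0.
rewrite comparable_le_max // => /orP [/eqP ->|/IH ->]; by rewrite ?lexx ?orbT.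
Qed.

Lemma bigmax_le (s : seq I) c : 0 <= c -> (forall x, x \in s -> F x <= c) ->
  \big[Num.max/0]_(x <- s) F x <= c.
Proof.
move=> c0; elim: s => [|a s IH] h; first by rewrite big_nil.
rewrite big_cons; case: (max_cases (F a) (\big[Num.max/0]_(x <- s) F x)) => ->.
  by apply: h; rewrite mem_head.
by apply: IH => x xs; apply: h; rewrite in_cons xs orbT.
Qed.

Lemma bigmax_attained (s : seq I) : 0 < \big[Num.max/0]_(x <- s) F x ->
  exists2 y, y \in s & \big[Num.max/0]_(x <- s) F x = F y.
Proof.
elim: s => [|a s IH]; first by rewrite big_nil ltxx.
rewrite big_cons; case: (max_cases (F a) (\big[Num.max/0]_(x <- s) F x)) => ->.
  by exists a; rewrite ?mem_head.
by case/IH => y ys ->; exists y; rewrite // in_cons ys orbT.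
Qed.

End NonnegMax.

Lemma eigenvalue_trmx (F : fieldType) n (A : 'M[F]_n) a :
  eigenvalue A^T a = eigenvalue A a.
Proof.
rewrite /eigenvalue /eigenspace -!mxrank_eq0 !mxrank_ker.
have -> : A^T - a%:M = (A - a%:M)^T by rewrite linearB /= tr_scalar_mx.
by rewrite mxrank_tr.
Qed.

Lemma eigenvaluesP n (A : 'M[algC]_n) z :
  reflect (exists2 v : 'cV_n, v != 0 & A *m v = z *: v) (z \in eigenvalues A).
Proof.
have -> : (z \in eigenvalues A) = eigenvalue A^T z.
  rewrite eigenvalue_trmx eigenvalue_root_char /eigenvalues.
  case: closed_field_poly_normal => r /= ->.
  by rewrite rootZ ?root_prod_XsubC // lead_coef_eq0 monic_neq0 ?char_poly_monic.
apply: (iffP eigenvalueP) => [[v Hv v0] | [v v0 Hv]]; exists v^T; rewrite ?trmx_eq0 //.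
- by rewrite -[A]trmxK -trmx_mul Hv linearZ.
- by rewrite -trmx_mul Hv linearZ.
Qed.

(* Let A >= 0 and w > 0 with A w <= rho w, and let A v = z v, v <> 0.
   Comparing v with w through the ratios m_l = |v_l| / w_l at an index where
   m is maximal bounds |z| by rho. *)
Section SubinvariantWeight.
Variables (n : nat) (A : 'M[algC]_n) (w : 'I_n -> algC) (rho : algC).
Hypothesis A_ge0 : forall k l, 0 <= A k l.
Hypothesis w_gt0 : forall l, 0 < w l.
Hypothesis Aw_le : forall k, \sum_l A k l * w l <= rho * w k.

Variables (z : algC) (v : 'cV[algC]_n).
Hypothesis v_neq0 : v != 0.
Hypothesis v_eig : A *m v = z *: v.

Let m (l : 'I_n) : algC := `|v l 0| / w l.

Let m_ge0 l : 0 <= m l.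
Proof. by rewrite /m divr_ge0 // ltW. Qed.

Let w_m l : w l * m l = `|v l 0|.
Proof. by rewrite /m mulrC divfK // gt_eqF. Qed.

Lemma max_ratio_index : exists k, (forall l, m l <= m k) /\ 0 < m k.
Proof.
have /existsP [l0 vl0] : [exists l, v l 0 != 0].
  apply: contraNT v_neq0 => /existsPn v0; apply/eqP/colP => l.
  by rewrite mxE; apply/eqP/negPn/v0.
have m_real l : m l \is Num.real by rewrite ger0_real ?m_ge0.
case: (@real_arg_maxP _ _ l0 predT m isT (fun l _ => m_real l)) => k _ kmax.
exists k; split=> [l|]; first exact: kmax.
apply: lt_le_trans (kmax l0 isT).
by rewrite divr_gt0 ?normr_gt0.
Qed.

(* At a maximizing index k, the triangle inequality in (A v)_k = z v_k gives
   a nonnegative combination of row-k defects bounded by (rho - |z|) w_k m_k. *)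
Lemma max_ratio_defect k : (forall l, m l <= m k) ->
  (rho * w k - \sum_l A k l * w l) * m k + \sum_l A k l * w l * (m k - m l)
  <= (rho - `|z|) * (w k * m k).
Proof.
move=> kmax.
have eig_k : z * v k 0 = \sum_l A k l * v l 0.
  by have := congr1 (fun u : 'cV_n => u k 0) v_eig; rewrite !mxE => <-.
have norm_k : `|z| * (w k * m k) <= \sum_l A k l * (w l * m l).
  rewrite w_m -normrM eig_k; apply: le_trans (ler_norm_sum _ _ _) _.
  by apply: ler_sum => l _; rewrite normrM ger0_norm // w_m.
have -> : \sum_l A k l * w l * (m k - m l) =
          (\sum_l A k l * w l) * m k - \sum_l A k l * (w l * m l).
  by rewrite mulr_suml -sumrB; apply: eq_bigr => l _; ring.
rewrite -subr_ge0; set S := \sum_l A k l * w l; set T := \sum_l _ * (_ * _).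
have -> : (rho - `|z|) * (w k * m k) - ((rho * w k - S) * m k + (S * m k - T))
          = T - `|z| * (w k * m k) by ring.
by rewrite subr_ge0.
Qed.

Let defect_terms_ge0 k : (forall l, m l <= m k) ->
  0 <= (rho * w k - \sum_l A k l * w l) * m k /\
  0 <= \sum_l A k l * w l * (m k - m l).
Proof.
move=> kmax; split; first by rewrite mulr_ge0 ?subr_ge0 ?m_ge0.
by apply: sumr_ge0 => l _; rewrite !mulr_ge0 ?subr_ge0 // ltW.
Qed.

Lemma norm_eig_le : `|z| <= rho.
Proof.
have [k [kmax mk_gt0]] := max_ratio_index.
have [d1 d2] := defect_terms_ge0 kmax.
have := le_trans (addr_ge0 d1 d2) (max_ratio_defect kmax).
by rewrite pmulr_lge0 ?subr_ge0 // mulr_gt0.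
Qed.

Lemma norm_eig_eq : (forall k l, k != l -> 0 < A k l) -> `|z| = rho ->
  forall k, \sum_l A k l * w l = rho * w k.
Proof.
move=> A_offdiag_gt0 z_rho.
have tight k : (forall l, m l <= m k) ->
    (rho * w k - \sum_l A k l * w l) * m k = 0 /\
    \sum_l A k l * w l * (m k - m l) = 0.
  move=> kmax; have [d1 d2] := defect_terms_ge0 kmax.
  have := max_ratio_defect kmax; rewrite z_rho subrr mul0r => le0.
  by split; apply/le_anti; rewrite ?d1 ?d2 andbT; apply: le_trans le0;
    rewrite ?lerDl ?lerDr.
have [k [kmax mk_gt0]] := max_ratio_index.
have m_const l : m l = m k.
  case: (eqVneq l k) => [-> // | lk].
  have terms_ge0 j : true -> 0 <= A k j * w j * (m k - m j).
    by move=> _; rewrite !mulr_ge0 ?subr_ge0 // ltW.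
  move: (psumr_eq0P terms_ge0 (tight k kmax).2 (i := l) isT) => /eqP.
  have kl : k != l by rewrite eq_sym.
  rewrite !mulf_eq0 (gt_eqF (A_offdiag_gt0 _ _ kl)) (gt_eqF (w_gt0 l)) /=.
  by rewrite subr_eq0 => /eqP.
move=> j; have jmax l : m l <= m j by rewrite !m_const.
move: (tight j jmax).1 => /eqP.
by rewrite mulf_eq0 m_const (gt_eqF mk_gt0) orbF subr_eq0 => /eqP ->.
Qed.

End SubinvariantWeight.

Section SpectralRadius.
Variables (n : nat) (A : 'M[algC]_n).

Lemma eig_le_spectral_radius z : z \in eigenvalues A -> `|z| <= spectral_radius A.
Proof. by apply: bigmax_ge => x; exact: normr_ge0. Qed.

Lemma spectral_radius_le c : 0 <= c ->
  (forall z : algC, z \in eigenvalues A -> `|z| <= c) -> spectral_radius A <= c.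
Proof. by apply: bigmax_le => x; exact: normr_ge0. Qed.

Lemma spectral_radius_attained : 0 < spectral_radius A ->
  exists2 z : algC, z \in eigenvalues A & `|z| = spectral_radius A.
Proof.
by rewrite /spectral_radius => /bigmax_attained [z zA ->]; exists z.
Qed.

Lemma spectral_radius_weight (w : 'I_n -> algC) (rho : algC) :
  (0 < n)%N -> 0 < rho ->
  (forall k l, 0 <= A k l) -> (forall k l, k != l -> 0 < A k l) ->
  (forall l, 0 < w l) -> (forall k, \sum_l A k l * w l <= rho * w k) ->
  spectral_radius A <= rho /\
  (spectral_radius A = rho <-> forall k, \sum_l A k l * w l = rho * w k).
Proof.
move=> n_gt0 rho_gt0 A_ge0 A_offdiag_gt0 w_gt0 Aw_le.
have bound : spectral_radius A <= rho.
  apply: spectral_radius_le (ltW rho_gt0) _ => z /eigenvaluesP [v v0 Av].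
  exact (norm_eig_le A_ge0 w_gt0 Aw_le v0 Av).
split=> //; split=> [sr_rho | Aw_eq].
  have sr_gt0 : 0 < spectral_radius A by rewrite sr_rho.
  have [z /eigenvaluesP [v v0 Av] z_sr] := spectral_radius_attained sr_gt0.
  by apply: (norm_eig_eq A_ge0 w_gt0 Aw_le v0 Av A_offdiag_gt0); rewrite z_sr.
have rho_eig : rho \in eigenvalues A.
  apply/eigenvaluesP; exists (\col_l w l).
    apply/eqP => /colP /(_ (Ordinal n_gt0)) /eqP.
    by rewrite !mxE gt_eqF.
  by apply/colP => k; rewrite !mxE -Aw_eq; apply: eq_bigr => l _; rewrite mxE.
apply/le_anti; rewrite bound /=.
by have := eig_le_spectral_radius rho_eig; rewrite ger0_norm // ltW.
Qed.

End SpectralRadius.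

Section DistanceFacts.
Variables (n : nat) (adj : rel 'I_n).

Lemma dist_diag k : dist adj k k = 0%N.
Proof.
move: (ltn_ord k); rewrite /dist; case: n adj k => // m adj' k _ /=.
suff -> : walk_of_length adj' k k 0 by [].
by apply/existsP; exists [tuple] => /=.
Qed.

(* Distinct vertices are at positive distance: no walk of length 0 joins them. *)
Lemma dist_gt0 k l : k != l -> (0 < dist adj k l)%N.
Proof.
move=> kl; move: (ltn_ord k); rewrite /dist.
case: n adj k l kl => // m adj' k l kl _ /=.
suff -> : walk_of_length adj' k l 0 = false by [].
apply/negbTE/existsP => -[p /andP [_]].
by rewrite (size0nil (size_tuple p)) /= (negbTE kl).
Qed.

Lemma dist_mx_ge0 k l : 0 <= dist_mx adj k l.
Proof. by rewrite mxE ler0n. Qed.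

Lemma dist_mx_offdiag_gt0 k l : k != l -> 0 < dist_mx adj k l.
Proof. by move=> kl; rewrite mxE ltr0n dist_gt0. Qed.

Hypothesis n_ge2 : (2 <= n)%N.

Lemma exists_other_vertex k : exists l : 'I_n, l != k.
Proof.
have : (0 < #|predC1 k|)%N by rewrite cardC1 card_ord -subn1 subn_gt0.
by case/card_gt0P => l; rewrite !inE; exists l.
Qed.

Lemma transmission_gt0 k : (0 < transmission adj k)%N.
Proof.
have [l lk] := exists_other_vertex k.
rewrite /transmission (bigD1 l) //= addn_gt0 dist_gt0 //.
by rewrite eq_sym.
Qed.

Lemma transmission_neq0 k : (transmission adj k)%:R != 0 :> algC.
Proof. by rewrite pnatr_eq0 -lt0n transmission_gt0. Qed.

Lemma tratio_ge0 k l : 0 <= tratio adj k l.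
Proof. by rewrite /tratio divr_ge0 ?ler0n. Qed.

Lemma tratio_diag k : tratio adj k k = 0.
Proof. by rewrite /tratio dist_diag mul0n mul0r. Qed.

(* The ratios are the entries of the similar matrix T^-1 D T, T = diag(D_k). *)
Lemma transmission_tratio k l :
  (transmission adj k)%:R * tratio adj k l =
  (dist adj k l)%:R * (transmission adj l)%:R.
Proof. by rewrite /tratio mulrC divfK ?transmission_neq0 // natrM. Qed.

Lemma avg_trans_sum k : avg_trans adj k = \sum_l tratio adj k l.
Proof. by rewrite /avg_trans natr_sum mulr_suml. Qed.

Lemma avg_trans_gt0 k : 0 < avg_trans adj k.
Proof.
have [l lk] := exists_other_vertex k.
have kl_gt0 : 0 < tratio adj k l.
  by rewrite /tratio divr_gt0 // ltr0n ?muln_gt0 ?transmission_gt0 ?dist_gt0 1?eq_sym.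
rewrite avg_trans_sum (bigD1 l) //=; apply: lt_le_trans kl_gt0 _.
by rewrite lerDl sumr_ge0 // => j _; apply: tratio_ge0.
Qed.

Lemma Nmax_ge0 : 0 <= Nmax adj.
Proof. by apply: bigmax_ge0 => k; apply: bigmax_ge0 => l; apply: tratio_ge0. Qed.

Lemma tratio_le_Nmax k l : tratio adj k l <= Nmax adj.
Proof.
have row_ge0 k' : 0 <= \big[Num.max/0]_(j < n) tratio adj k' j.
  by apply: bigmax_ge0 => j; apply: tratio_ge0.
have := bigmax_ge row_ge0 (mem_index_enum k); apply: le_trans.
exact: (bigmax_ge (tratio_ge0 k) (mem_index_enum l)).
Qed.

End DistanceFacts.

Section WeightVector.
Variables (n : nat) (adj : rel 'I_n) (i : 'I_n).

Local Notation M := (avg_trans adj).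
Local Notation N := (Nmax adj).
Local Notation T k := ((transmission adj k)%:R : algC).

Definition gap_sum : algC := \sum_(k < n | (k < i)%N) (M k - M i).

(* The right-hand side rho_i of the bound, the positive root of
   x^2 - (M_i - N) x - N (M_i + sigma_i). *)
Definition bound_rho : algC :=
  (M i - N + sqrtC ((M i + N) ^+ 2 + 4%:R * N * gap_sum)) / 2%:R.

Definition rel_excess (l : 'I_n) : algC :=
  if (l < i)%N then (M l - M i) / (bound_rho + N) else 0.

Definition weight (l : 'I_n) : algC := T l * (1 + rel_excess l).

Definition slack (k : 'I_n) : algC :=
  bound_rho * (1 + rel_excess k) - \sum_l tratio adj k l * (1 + rel_excess l).

Lemma bound_rho_quadratic :
  bound_rho * (bound_rho + N) = M i * (bound_rho + N) + N * gap_sum.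
Proof.
rewrite /bound_rho; set q := sqrtC _.
have q2 : q ^+ 2 = (M i + N) ^+ 2 + 4%:R * N * gap_sum by rewrite sqrtCK.
apply/eqP; rewrite -subr_eq0; set lhs := (X in X == 0).
have -> : lhs = (q ^+ 2 - ((M i + N) ^+ 2 + 4%:R * N * gap_sum)) / 4%:R.
  by rewrite /lhs; field.
by rewrite q2 subrr mul0r.
Qed.

Lemma sum_rel_excess : \sum_l rel_excess l = gap_sum / (bound_rho + N).
Proof. by rewrite /rel_excess -big_mkcond /= /gap_sum mulr_suml. Qed.

Hypothesis n_ge2 : (2 <= n)%N.
Hypothesis M_sorted : forall k l : 'I_n, (k <= l)%N -> M l <= M k.

Lemma gap_sum_ge0 : 0 <= gap_sum.
Proof. by apply: sumr_ge0 => k ki; rewrite subr_ge0 M_sorted // ltnW. Qed.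

(* rho_i + N > 0, so delta is well defined. *)
Lemma bound_rho_N_gt0 : 0 < bound_rho + N.
Proof.
set X := (M i + N) ^+ 2 + 4%:R * N * gap_sum.
have -> : bound_rho + N = (M i + N + sqrtC X) / 2%:R by rewrite /bound_rho; field.
apply: divr_gt0; last by rewrite ltr0n.
apply: lt_le_trans (avg_trans_gt0 adj n_ge2 i) _.
rewrite -addrA lerDl addr_ge0 ?Nmax_ge0 // sqrtC_ge0 /X addr_ge0 //.
  by rewrite exprn_ge0 // addr_ge0 ?Nmax_ge0 // ltW // avg_trans_gt0.
by rewrite !mulr_ge0 ?Nmax_ge0 ?gap_sum_ge0.
Qed.

Lemma bound_rho_decomp : bound_rho = M i + N * \sum_l rel_excess l.
Proof.
have pN_neq0 : bound_rho + N != 0 by rewrite gt_eqF // bound_rho_N_gt0.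
rewrite sum_rel_excess mulrA -[N * gap_sum](addKr (M i * (bound_rho + N))).
by rewrite -bound_rho_quadratic; field.
Qed.

(* Since the M_k decrease, delta_l >= 0 and hence w > 0. *)
Lemma rel_excess_ge0 l : 0 <= rel_excess l.
Proof.
rewrite /rel_excess; case: ifP => // li.
by rewrite divr_ge0 ?subr_ge0 ?M_sorted ?(ltnW li) // ltW // bound_rho_N_gt0.
Qed.

Lemma bound_rho_gt0 : 0 < bound_rho.
Proof.
rewrite bound_rho_decomp; apply: lt_le_trans (avg_trans_gt0 adj n_ge2 i) _.
by rewrite lerDl mulr_ge0 ?Nmax_ge0 // sumr_ge0 // => l _; apply: rel_excess_ge0.
Qed.

Lemma weight_gt0 l : 0 < weight l.
Proof.
rewrite /weight mulr_gt0 ?ltr0n ?transmission_gt0 //.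
by apply: lt_le_trans ltr01 _; rewrite lerDl rel_excess_ge0.
Qed.

Lemma slack_decomp k : slack k =
  (if (k < i)%N then 0 else M i - M k)
  + \sum_(l | l != k) (N - tratio adj k l) * rel_excess l.
Proof.
have row_sum : \sum_l tratio adj k l * (1 + rel_excess l) =
               M k + \sum_(l | l != k) tratio adj k l * rel_excess l.
  under eq_bigr do rewrite mulrDr mulr1.
  by rewrite big_split /= -avg_trans_sum (bigD1 k) //= tratio_diag mul0r add0r.
have head : (bound_rho + N) * rel_excess k + (M i - M k) =
            if (k < i)%N then 0 else M i - M k.
  rewrite /rel_excess; case: ifP => _; last by rewrite mulr0 add0r.
  by rewrite mulrC divfK ?gt_eqF ?bound_rho_N_gt0 // addrC subrKA subrr.
have rho_k : bound_rho = M i + N * rel_excess k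
                         + N * \sum_(l | l != k) rel_excess l.
  by rewrite bound_rho_decomp (bigD1 k) //= mulrDr addrA.
rewrite /slack row_sum -head.
under [X in _ = _ + X]eq_bigr do rewrite mulrBl.
rewrite sumrB -mulr_sumr.
apply/eqP; rewrite -subr_eq0; set d := rel_excess k.
set D := \sum_(l | l != k) rel_excess l; set B := \sum_(l | l != k) _.
set p := bound_rho; set lhs := (X in X == 0).
have -> : lhs = p - (M i + N * d + N * D) by rewrite /lhs; ring.
by rewrite -rho_k subrr.
Qed.

Lemma slack_ge0 k : 0 <= slack k.
Proof.
rewrite slack_decomp addr_ge0 //.
  by case: ltnP => // ik; rewrite subr_ge0 M_sorted.
by apply: sumr_ge0 => l _; rewrite mulr_ge0 ?rel_excess_ge0 // subr_ge0 tratio_le_Nmax.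
Qed.

Lemma dist_weight k :
  \sum_l dist_mx adj k l * weight l = bound_rho * weight k - T k * slack k.
Proof.
rewrite /slack mulrBr opprB addrC /weight mulrCA subrK mulr_sumr.
by apply: eq_bigr => l _; rewrite mxE [LHS]mulrA [RHS]mulrA transmission_tratio.
Qed.

Lemma rel_excess_eq0 l : M l = M i -> rel_excess l = 0.
Proof. by move=> Ml; rewrite /rel_excess Ml subrr mul0r if_same. Qed.

Lemma rel_excess_neq0 (l : 'I_n) : (l < i)%N -> M l != M i -> rel_excess l != 0.
Proof.
move=> li Ml; rewrite /rel_excess li mulf_neq0 ?subr_eq0 //.
by rewrite invr_neq0 // gt_eqF // bound_rho_N_gt0.
Qed.

Definition equality_case : Prop :=
  (forall k l : 'I_n, M k = M l) \/
  (exists t : 'I_n,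
     [/\ (1 <= t)%N, (t <= i)%N,
         (forall k l : 'I_n, (l < t)%N -> k != l -> tratio adj k l = N)
       & (forall k : 'I_n, (t <= k)%N -> M k = M t)]).

Lemma slack_eq0_parts k : slack k = 0 ->
  ((i <= k)%N -> M k = M i) /\
  (forall l, l != k -> (N - tratio adj k l) * rel_excess l = 0).
Proof.
have head_ge0 : 0 <= (if (k < i)%N then 0 else M i - M k).
  by case: ltnP => // ik; rewrite subr_ge0 M_sorted.
have terms_ge0 l : l != k -> 0 <= (N - tratio adj k l) * rel_excess l.
  by move=> _; rewrite mulr_ge0 ?rel_excess_ge0 // subr_ge0 tratio_le_Nmax.
rewrite slack_decomp => /eqP; rewrite paddr_eq0 ?sumr_ge0 //.
case/andP => /eqP head /eqP tail; split; last exact: psumr_eq0P tail.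
by move=> ik; move: head; rewrite ltnNge ik /= => /eqP; rewrite subr_eq0 => /eqP.
Qed.

(* Vanishing slacks give the equality case with t the least index such that
   M_t = M_i (the first alternative when t = 0). *)
Lemma slack_eq0_equality_case : (forall k, slack k = 0) -> equality_case.
Proof.
move=> slack0.
have [t /eqP Mt t_min] :=
  @arg_minnP _ i (fun t : 'I_n => M t == M i) (fun t : 'I_n => nat_of_ord t) (eqxx _).
have ti : (t <= i)%N by apply: t_min.
have M_tail (k : 'I_n) : (t <= k)%N -> M k = M i.
  move=> tk; case: (leqP k i) => [ki | /ltnW ik]; last exact: (slack_eq0_parts (slack0 k)).1.
  by apply/le_anti/andP; split; [rewrite -Mt |]; apply: M_sorted.
case: (posnP t) => [t0 | t_gt0]; first by left=> k l; rewrite !M_tail ?t0.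
right; exists t; split=> // [k l lt kl | k tk]; last by rewrite M_tail // Mt.
have Ml : M l != M i by apply: contraTneq lt => /eqP /t_min; rewrite leqNgt.
have lk : l != k by rewrite eq_sym.
move: ((slack_eq0_parts (slack0 k)).2 l lk) => /eqP.
rewrite mulf_eq0 (negbTE (rel_excess_neq0 (leq_trans lt ti) Ml)) orbF.
by rewrite subr_eq0 => /eqP.
Qed.

Lemma equality_case_slack_eq0 : equality_case -> forall k, slack k = 0.
Proof.
case=> [M_const | [t [t_ge1 ti tratio_N M_tail]]] k.
  rewrite slack_decomp (M_const i k) subrr if_same add0r.
  by apply: big1 => l _; rewrite rel_excess_eq0 ?mulr0.
have Mit : M i = M t by apply: M_tail.
rewrite slack_decomp.
have -> : (if (k < i)%N then 0 else M i - M k) = 0.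
  by case: ltnP => // ik; rewrite (M_tail k) ?(leq_trans ti) // Mit subrr.
rewrite add0r; apply: big1 => l lk; case: (ltnP l t) => lt.
  by rewrite tratio_N ?subrr ?mul0r // eq_sym.
by rewrite rel_excess_eq0 ?mulr0 // M_tail // Mit.
Qed.

Lemma weight_subinvariant k :
  \sum_l dist_mx adj k l * weight l <= bound_rho * weight k.
Proof. by rewrite dist_weight lerBlDr lerDl mulr_ge0 ?ler0n ?slack_ge0. Qed.

Lemma weight_eigenvectorP :
  (forall k, \sum_l dist_mx adj k l * weight l = bound_rho * weight k)
  <-> equality_case.
Proof.
have eigen_slack k : (\sum_l dist_mx adj k l * weight l = bound_rho * weight k)
                     <-> slack k = 0.
  rewrite dist_weight -[RHS]subr0.
  split=> [/addrI/oppr_inj/eqP | ->]; last by rewrite mulr0.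
  by rewrite mulf_eq0 (negbTE (transmission_neq0 adj n_ge2 k)) => /eqP.
split=> [eig | /equality_case_slack_eq0 slack0 k].
  by apply: slack_eq0_equality_case => k; apply/eigen_slack.
exact/eigen_slack.
Qed.

End WeightVector.

(* Vertices are 'I_n, i.e. 0-indexed: paper's vertex i+1 is our i.  The
   theorem is the Collatz-Wielandt lemma applied to D(G) and the weight w. *)
Theorem corollary7 (n : nat) (adj : rel 'I_n)
  (Hn : (2 <= n)%N)
  (Hsimple : simple_graph adj)
  (Hconn : connected_graph adj)
  (Hsorted : forall k l : 'I_n, (k <= l)%N -> avg_trans adj l <= avg_trans adj k)
  (i : 'I_n) :
  let M := avg_trans adj in
  let N := Nmax adj in
  let bound :=
    (M i - N + sqrtC ((M i + N) ^+ 2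
                      + 4%:R * N * \sum_(k < n | (k < i)%N) (M k - M i))) / 2%:R in
  spectral_radius (dist_mx adj) <= bound /\
  (spectral_radius (dist_mx adj) = bound <->
     (forall k l : 'I_n, M k = M l) \/
     (exists t : 'I_n,
        [/\ (1 <= t)%N, (t <= i)%N,
            (forall k l : 'I_n, (l < t)%N -> k != l -> tratio adj k l = N)
          & (forall k : 'I_n, (t <= k)%N -> M k = M t)])).
Proof.
move=> M N bound; rewrite -/(bound_rho adj i).
have [bound_le bound_eq] := spectral_radius_weight (ltnW Hn)
  (bound_rho_gt0 i Hn Hsorted) (@dist_mx_ge0 _ adj) (@dist_mx_offdiag_gt0 _ adj)
  (weight_gt0 i Hn Hsorted) (weight_subinvariant i Hn Hsorted).
split=> //; rewrite bound_eq; exact: weight_eigenvectorP.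
Qed.
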